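(* Let $F$ be a finite-dimensional subspace of $c_0$. Then there exists $k\in\mathbb N$ such that $F$ has property-$(k-U)$ in $c_0$.
   Context: $c_0$ carries the sup norm. For a closed subspace $Y$ of $X$ and $y^*\in Y^*$, $HB(y^* )=\{x^*\in X^*:x^*|_Y=y^*,\ \|x^*\|=\|y^*\|\}$; for a set $A$ and $a\in A$, $\dim A=\dim\operatorname{span}(A-a)$. $Y$ has property-$(k-U)$ in $X$ if $\dim HB(y^* )\le k-1$ for all $y^*\in S_{Y^*}$. *)

From mathcomp Require Import all_boot all_order all_algebra.
From mathcomp Require Import all_classical all_reals all_analysis.
Set Implicit Arguments. Unset Strict Implicit. Unset Printing Implicit Defensive.
Import Order.TTheory GRing.Theory Num.Theory.
Local Open Scope classical_set_scope.
Local Open Scope ring_scope.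
Import numFieldNormedType.Exports.

Section C0.
Variable R : realType.

Definition in_c0 (x : nat -> R) : Prop := x n @[n --> \oo] --> (0 : R).

Definition supnorm (x : nat -> R) : R := sup (range (fun n => `|x n|)).

(* A functional is represented by a map (nat -> R) -> R; only its values on
   the relevant subspace S matter. *)
Definition lin_on (S : set (nat -> R)) (f : (nat -> R) -> R) : Prop :=
  forall x y, S x -> S y -> forall a b : R,
    f (fun n => a * x n + b * y n) = a * f x + b * f y.

Definition bounded_on (S : set (nat -> R)) (f : (nat -> R) -> R) : Prop :=
  exists M : R, forall x, S x -> `|f x| <= M * supnorm x.

Definition in_dual (S : set (nat -> R)) (f : (nat -> R) -> R) : Prop :=
  lin_on S f /\ bounded_on S f.

Definition dual_norm (S : set (nat -> R)) (f : (nat -> R) -> R) : R :=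
  sup [set `|f x| | x in [set x | S x /\ supnorm x <= 1]].

Definition fin_dim_subspace_c0 (Y : set (nat -> R)) : Prop :=
  exists (n : nat) (e : 'I_n -> nat -> R),
    (forall i, in_c0 (e i)) /\
    Y = [set x | exists c : 'I_n -> R, x = (fun m => \sum_(i < n) c i * e i m)].

Definition HBset (Y : set (nat -> R)) (g : (nat -> R) -> R) : set ((nat -> R) -> R) :=
  [set f | in_dual in_c0 f /\ (forall y, Y y -> f y = g y) /\
           dual_norm in_c0 f = dual_norm Y g].

(* dim A <= d  (A a set of functionals on c_0): for a in A, span(A - a) has
   dimension <= d in the dual, i.e. is spanned by d elements of the dual of c_0
   (equality of functionals = equality on c_0). *)
Definition dim_le (A : set ((nat -> R) -> R)) (d : nat) : Prop :=
  forall a, A a -> exists g : 'I_d -> (nat -> R) -> R,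
    (forall i, in_dual in_c0 (g i)) /\
    forall f, A f -> exists c : 'I_d -> R,
      forall x, in_c0 x -> f x - a x = \sum_(i < d) c i * g i x.

Definition prop_kU (Y : set (nat -> R)) (k : nat) : Prop :=
  forall g, in_dual Y g -> dual_norm Y g = 1 -> dim_le (HBset Y g) (k - 1)%N.

End C0.

From mathcomp Require Import all_boot all_order all_algebra.
From mathcomp Require Import all_classical all_reals all_analysis.
From mathcomp Require Import ring lra.
Set Implicit Arguments. Unset Strict Implicit. Unset Printing Implicit Defensive.
Import Order.TTheory GRing.Theory Num.Theory.
Local Open Scope classical_set_scope.
Local Open Scope ring_scope.
Import numFieldNormedType.Exports.

(* Every y in a finite-dimensional subspace F of c_0 is recovered from finitely
   many of its coordinates: y = sum_p y(n_p) b_p with fixed b_p in c_0.  Hence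
   |y m| <= ||y|| beta m for beta = sum_p |b_p| in c_0, so there is a K with
   |y m| <= ||y|| / 2 for all m >= K.  If f is a norm-one Hahn-Banach extension
   of g and u in c_0 vanishes below K with ||u|| <= 1/2, then x +- u stays in the
   unit ball for each x in the unit ball of F, so |g x| + |f u| <= 1; as |g x|
   comes arbitrarily close to 1, f u = 0.  Thus every extension is determined by
   its values on the first K unit vectors, and dim HB(g) <= K. *)

Lemma normD_normB_le (R : realFieldType) (a b c : R) :
  `|a + b| <= c -> `|a - b| <= c -> `|a| + `|b| <= c.
Proof.
rewrite !ler_norml.
have [ha|ha] := lerP 0 a; have [hb|hb] := lerP 0 b;
rewrite ?(ger0_norm ha) ?(ltr0_norm ha) ?(ger0_norm hb) ?(ltr0_norm hb);
by move=> /andP[? ?] /andP[? ?]; lra.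
Qed.

Section C0Sequences.
Variable R : realType.
Implicit Types (x y : nat -> R) (a b : R).

Lemma in_c0P x :
  in_c0 x <-> forall e, 0 < e -> exists N, forall n, (N <= n)%N -> `|x n| <= e.
Proof.
rewrite /in_c0; split.
- move=> /cvgrPdist_le x0 e e0; have [N _ HN] := x0 e e0.
  by exists N => n Nn; have := HN n Nn; rewrite sub0r normrN.
- move=> H; apply/cvgrPdist_le => e e0; have [N HN] := H e e0.
  by apply: filterS (nbhs_infty_ge N) => n Nn; rewrite sub0r normrN; exact: HN.
Qed.

Lemma in_c0D x y : in_c0 x -> in_c0 y -> in_c0 (fun m => x m + y m).
Proof. rewrite /in_c0 => hx hy; have := cvgD hx hy; rewrite addr0; exact. Qed.

Lemma in_c0Z a x : in_c0 x -> in_c0 (fun m => a * x m).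
Proof.
rewrite /in_c0 => hx; have := cvgMl_tmp (a := a) hx; rewrite mulr0; exact.
Qed.

Lemma in_c0_comb a b x y :
  in_c0 x -> in_c0 y -> in_c0 (fun m => a * x m + b * y m).
Proof. by move=> hx hy; apply: in_c0D; exact: in_c0Z. Qed.

Lemma in_c0_sum (I : Type) (s : seq I) (w : I -> nat -> R) :
  (forall i, List.In i s -> in_c0 (w i)) -> in_c0 (fun m => \sum_(i <- s) w i m).
Proof.
elim: s => [|i s IHs] hs.
  by under eq_fun do rewrite big_nil; exact: cvg_cst.
under eq_fun do rewrite big_cons.
by apply: in_c0D; [apply: hs; left | apply: IHs => j hj; apply: hs; right].
Qed.

Lemma in_c0_norm x : in_c0 x -> in_c0 (fun m => `|x m|).
Proof. rewrite /in_c0 => hx; have := cvg_norm hx; rewrite normr0; exact. Qed.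

Lemma in_c0_has_sup x : in_c0 x -> has_sup (range (fun n => `|x n|)).
Proof.
move=> hx; have [M [_ HM]] := cvg_seq_bounded (cvgP _ hx).
split; first by exists `|x 0%N|, 0%N.
by exists (M + 1) => _ [n _ <-]; apply: (HM (M + 1)) => //; rewrite ltrDl.
Qed.

Lemma supnorm_ge0 x : 0 <= supnorm x.
Proof.
have [hs|/sup_out] := pselect (has_sup (range (fun n => `|x n|))).
  by apply: le_trans (sup_upper_bound hs _); last by exists 0%N.
by rewrite /supnorm => ->.
Qed.

Lemma supnorm_ge x n : in_c0 x -> `|x n| <= supnorm x.
Proof. by move=> /in_c0_has_sup hs; apply: sup_upper_bound; last by exists n. Qed.

Lemma supnorm_le x b : (forall n, `|x n| <= b) -> supnorm x <= b.
Proof.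
move=> H; apply: ge_sup; first by exists `|x 0%N|, 0%N.
by move=> _ [n _ <-].
Qed.

Definition delta (i : nat) : nat -> R := fun m => if m == i then 1 else 0.

Definition tail (K : nat) x : nat -> R := fun m => if (m < K)%N then 0 else x m.

Lemma in_c0_delta i : in_c0 (delta i).
Proof.
apply/in_c0P => e e0; exists i.+1 => n hn; rewrite /delta.
by rewrite eq_sym (ltn_eqF hn) normr0 ltW.
Qed.

Lemma in_c0_tail K x : in_c0 x -> in_c0 (tail K x).
Proof.
move=> /in_c0P H; apply/in_c0P => e e0; have [N HN] := H e e0.
exists N => n hn; rewrite /tail; case: ifP => _; last exact: HN.
by rewrite normr0 ltW.
Qed.

End C0Sequences.

Section Functionals.
Variable R : realType.
Implicit Types (S : set (nat -> R)) (phi : (nat -> R) -> R) (x z : nat -> R).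

Lemma lin_onZ S phi c x :
  lin_on S phi -> S x -> phi (fun n => c * x n) = c * phi x.
Proof.
move=> hl Sx; have -> : (fun n => c * x n) = (fun n => c * x n + 0 * x n).
  by apply: funext => n; rewrite mul0r addr0.
by rewrite hl // mul0r addr0.
Qed.

Lemma lin_on_c0_tail_decomp phi K x : lin_on (@in_c0 R) phi -> in_c0 x ->
  phi x = \sum_(i < K) phi (delta R i) * x i + phi (tail K x).
Proof.
move=> hl hx; elim: K => [|K ->].
  by rewrite big_ord0 add0r; congr phi; apply: funext => m; rewrite /tail.
have -> : tail K x = fun m => x K * delta R K m + 1 * tail K.+1 x m.
  apply: funext => m; rewrite /tail /delta ltnS.
  by case: (ltngtP m K) => h; rewrite ?h /= ?mulr0 ?mulr1 ?mul1r ?add0r ?addr0.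
rewrite hl; [|exact: in_c0_delta|exact: in_c0_tail].
by rewrite big_ord_recr /= mul1r addrA [x K * _]mulrC.
Qed.

Lemma lin_on_c0_expand phi K : lin_on (@in_c0 R) phi ->
    (forall z, in_c0 z -> (forall m, (m < K)%N -> z m = 0) -> phi z = 0) ->
  forall x, in_c0 x -> phi x = \sum_(i < K) phi (delta R i) * x i.
Proof.
move=> hl vanish x hx; rewrite (lin_on_c0_tail_decomp K hl hx) vanish ?addr0 //.
  exact: in_c0_tail.
by move=> m hm; rewrite /tail hm.
Qed.

Lemma in_dual_eval (i : nat) : in_dual (@in_c0 R) (fun x : nat -> R => x i).
Proof.
split; first by move=> x y _ _ a b.
by exists 1 => x hx; rewrite mul1r; exact: supnorm_ge.
Qed.

Lemma dual_norm_ge S phi x : bounded_on S phi -> S x -> supnorm x <= 1 ->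
  `|phi x| <= dual_norm S phi.
Proof.
move=> [M hM] Sx sx; apply: sup_upper_bound; last by exists x.
split; first by exists `|phi x|, x.
exists `|M| => _ [y [Sy sy] <-]; apply: le_trans (hM y Sy) _.
have s0 := supnorm_ge0 y.
by apply: le_trans (ler_wpM2r s0 (ler_norm M)) _; exact: ler_piMr.
Qed.

Lemma dual_norm_adherent S phi (eps : R) : dual_norm S phi != 0 -> 0 < eps ->
  exists x, [/\ S x, supnorm x <= 1 & dual_norm S phi - eps < `|phi x|].
Proof.
move=> nz eps0; rewrite /dual_norm in nz *; set E := (X in sup X) in nz *.
have [hs|/sup_out E0] := pselect (has_sup E); last by rewrite E0 eqxx in nz.
by have [_ [x [Sx sx] <-] ?] := sup_adherent eps0 hs; exists x.
Qed.

End Functionals.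

Section Interpolation.
Variable R : realType.
Implicit Types (L : seq (nat * (nat -> R))) (x y v : nat -> R).

(* Each pair (n, b) in L is a node n together with its cardinal function b. *)
Definition interpolant L y : nat -> R := fun m => \sum_(p <- L) y p.1 * p.2 m.

Definition c0_cardinals L : Prop := forall p, List.In p L -> in_c0 p.2.

Definition lincomb n (c : 'I_n -> R) (e : 'I_n -> nat -> R) : nat -> R :=
  fun m => \sum_(i < n) c i * e i m.

Lemma in_c0_interpolant L y : c0_cardinals L -> in_c0 (interpolant L y).
Proof. by move=> hL; apply: in_c0_sum => p /hL; exact: in_c0Z. Qed.

Lemma interpolant_comb L x y a b : interpolant L (fun n => a * x n + b * y n) =
  fun m => a * interpolant L x m + b * interpolant L y m.
Proof.
apply: funext => m; rewrite /interpolant !mulr_sumr -big_split /=.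
by apply: eq_bigr => p _; ring.
Qed.

Lemma interpolant_extend (P : set (nat -> R)) L v :
    c0_cardinals L -> in_c0 v -> (forall y, P y -> interpolant L y = y) ->
  exists L', c0_cardinals L' /\ forall y l, P y ->
    interpolant L' (fun n => y n + l * v n) = (fun n => y n + l * v n).
Proof.
move=> hL hv HP; pose r m := v m - interpolant L v m.
have r_c0 : in_c0 r.
  have -> : r = fun m => 1 * v m + (-1) * interpolant L v m.
    by apply: funext => m; rewrite /r; ring.
  by apply: in_c0_comb => //; exact: in_c0_interpolant.
have interp_w y l : P y -> interpolant L (fun n => y n + l * v n) =
    fun m => y m + l * v m - l * r m.
  move=> Py; have -> : (fun n => y n + l * v n) = (fun n => 1 * y n + l * v n).
    by apply: funext => n; rewrite mul1r.
  by rewrite interpolant_comb HP //; apply: funext => m; rewrite /r; ring.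
(* A residual r that is nonzero at q makes q a new node with cardinal r / r q;
   the old cardinals are corrected by multiples of r to vanish at q. *)
have [[q rq]|r0] := pselect (exists q, r q != 0); last first.
  exists L; split => // y l Py; rewrite interp_w //; apply: funext => m.
  have -> : r m = 0 by apply/eqP; apply: contra_notT r0 => h; exists m.
  by rewrite mulr0 subr0.
exists ((q, fun m => r m / r q) ::
  [seq (p.1, fun m => p.2 m - p.2 q / r q * r m) | p <- L]); split.
  move=> p [<-|/List.in_map_iff [p0 [<- /hL p0_c0]]] /=.
    by under eq_fun do rewrite mulrC; exact: in_c0Z.
  have -> : (fun m => p0.2 m - p0.2 q / r q * r m) =
      (fun m => 1 * p0.2 m + (- (p0.2 q / r q)) * r m).
    by apply: funext => m; ring.
  exact: in_c0_comb.
move=> y l Py; apply: funext => m; set w := fun n => y n + l * v n.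
rewrite /interpolant big_cons big_map /=.
have -> : \sum_(p <- L) w p.1 * (p.2 m - p.2 q / r q * r m) =
    interpolant L w m - interpolant L w q / r q * r m.
  by rewrite /interpolant !mulr_suml -sumrB; apply: eq_bigr => p _; ring.
by rewrite interp_w // /w; field.
Qed.

Lemma span_interpolant n (e : 'I_n -> nat -> R) : (forall i, in_c0 (e i)) ->
  exists L, c0_cardinals L /\ forall c, interpolant L (lincomb c e) = lincomb c e.
Proof.
elim: n e => [|n IHn] e he.
  exists [::]; split => [? []|c].
  by apply: funext => m; rewrite /interpolant /lincomb big_nil big_ord0.
pose e' i := e (widen_ord (leqnSn n) i).
have [L [hL HL]] := IHn e' (fun i => he _).
have HP : forall y, range (fun c => lincomb c e') y -> interpolant L y = y.
  by move=> _ [c _ <-].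
have [L' [hL' HL']] := interpolant_extend hL (he ord_max) HP.
exists L'; split => // c; pose c' i := c (widen_ord (leqnSn n) i).
have -> : lincomb c e = fun m => lincomb c' e' m + c ord_max * e ord_max m.
  by apply: funext => m; rewrite /lincomb big_ord_recr.
by apply: HL'; exists c'.
Qed.

End Interpolation.

Section FinDimSubspaces.
Variable R : realType.
Implicit Types F : set (nat -> R).

Lemma fin_dim_subspace_c0_interpolant F : fin_dim_subspace_c0 F ->
  exists L, c0_cardinals L /\ forall y, F y -> interpolant L y = y.
Proof.
move=> [n [e [he ->]]]; have [L [hL HL]] := span_interpolant he.
by exists L; split => // _ [c ->]; exact: HL.
Qed.

Lemma fin_dim_subspace_c0_sub F : fin_dim_subspace_c0 F -> F `<=` @in_c0 R.
Proof.
move=> /fin_dim_subspace_c0_interpolant [L [hL HL]] y Fy.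
by rewrite -(HL y Fy); exact: in_c0_interpolant.
Qed.

Lemma fin_dim_subspace_c0_small_tails F (eps : R) :
  fin_dim_subspace_c0 F -> 0 < eps ->
  exists K, forall y, F y -> forall m, (K <= m)%N -> `|y m| <= eps * supnorm y.
Proof.
move=> hF eps0; have [L [hL HL]] := fin_dim_subspace_c0_interpolant hF.
pose beta m : R := \sum_(p <- L) `|p.2 m|.
have [K HK] : exists K, forall m, (K <= m)%N -> beta m <= eps.
  have /in_c0P/(_ eps eps0) [K HK] : in_c0 beta.
    by apply: in_c0_sum => p /hL; exact: in_c0_norm.
  by exists K => m /HK; apply: le_trans; exact: ler_norm.
exists K => y Fy m Km.
have y_c0 : in_c0 y by rewrite -(HL y Fy); exact: in_c0_interpolant.
rewrite -{1}(HL y Fy); apply: le_trans (ler_norm_sum _ _ _) _.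
apply: le_trans (_ : supnorm y * beta m <= _); last first.
  by rewrite mulrC; exact: (ler_wpM2r (supnorm_ge0 y) (HK m Km)).
rewrite /beta mulr_sumr; apply: ler_sum => p _.
by rewrite normrM ler_wpM2r // supnorm_ge.
Qed.

End FinDimSubspaces.

Section HahnBanachExtensions.
Variables (R : realType) (Y : set (nat -> R)) (g : (nat -> R) -> R) (K : nat).
Hypothesis Y_c0 : Y `<=` @in_c0 R.
Hypothesis Y_small_tails :
  forall y, Y y -> forall m, (K <= m)%N -> `|y m| <= 2^-1 * supnorm y.
Hypothesis g_norm1 : dual_norm Y g = 1.

Lemma HBset_tail_bound f x u : HBset Y g f -> Y x -> supnorm x <= 1 ->
    in_c0 u -> (forall m, (m < K)%N -> u m = 0) -> (forall m, `|u m| <= 2^-1) ->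
  `|g x| + `|f u| <= 1.
Proof.
move=> [[flin fbd] [fg fn]] Yx sx u_c0 u0 uh; have x_c0 := Y_c0 Yx.
have ball (s : R) : `|s| = 1 -> `|f (fun m => 1 * x m + s * u m)| <= 1.
  move=> s1; rewrite -[leRHS]g_norm1 -fn.
  apply: dual_norm_ge fbd (in_c0_comb _ _ x_c0 u_c0) _.
  apply: supnorm_le => m; apply: le_trans (ler_normD _ _) _.
  rewrite mul1r normrM s1 mul1r.
  have [mK|Km] := ltnP m K.
    by rewrite u0 // normr0 addr0; apply: le_trans (supnorm_ge m x_c0) sx.
  by have := Y_small_tails Yx Km; have := uh m; lra.
have := ball 1 (normr1 _); have := ball (-1) (normrN1 _).
rewrite !flin // (fg _ Yx) !mul1r mulN1r => hB hD.
exact: normD_normB_le.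
Qed.

Lemma HBset_vanish_on_tails f z : HBset Y g f -> in_c0 z ->
  (forall m, (m < K)%N -> z m = 0) -> f z = 0.
Proof.
move=> Hf z_c0 z0; have s0 := supnorm_ge0 z.
pose c := (2 * (supnorm z + 1))^-1.
have c_gt0 : 0 < c by rewrite invr_gt0; lra.
have cK : c * (2 * (supnorm z + 1)) = 1 by rewrite mulVf //; lra.
pose u m := c * z m.
have u_c0 : in_c0 u := in_c0Z c z_c0.
have u0 m : (m < K)%N -> u m = 0 by move=> mK; rewrite /u z0 ?mulr0.
have u_half m : `|u m| <= 2^-1.
  by rewrite /u normrM (gtr0_norm c_gt0); have := supnorm_ge m z_c0; nra.
have fu0 : f u = 0.
  case: (eqVneq (f u) 0) => // nz; exfalso.
  have n1 : dual_norm Y g != 0 by rewrite g_norm1 oner_neq0.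
  have fu_gt0 : 0 < `|f u| by rewrite normr_gt0.
  have [x [Yx sx]] := dual_norm_adherent n1 fu_gt0.
  rewrite g_norm1 => gx.
  by have := HBset_tail_bound Hf Yx sx u_c0 u0 u_half; lra.
have : f u = c * f z by exact: lin_onZ Hf.1.1 z_c0.
by rewrite fu0 => /esym/eqP; rewrite mulf_eq0 (gt_eqF c_gt0) => /eqP.
Qed.

End HahnBanachExtensions.

Theorem theorem4p14 (R : realType) (F : set (nat -> R)) :
  fin_dim_subspace_c0 F -> exists k : nat, prop_kU F k.
Proof.
move=> hF; have F_c0 := fin_dim_subspace_c0_sub hF.
have half_gt0 : 0 < 2^-1 :> R by rewrite invr_gt0.
have [K small] := fin_dim_subspace_c0_small_tails hF half_gt0.
exists K.+1 => g _ g_norm1; rewrite subn1 /= => a Ha.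
exists (fun (i : 'I_K) x => x i); split => [i|f Hf]; first exact: in_dual_eval.
exists (fun i => f (delta R i) - a (delta R i)) => x x_c0.
have expand (h : (nat -> R) -> R) :
    HBset F g h -> h x = \sum_(i < K) h (delta R i) * x i.
  move=> Hh; apply: lin_on_c0_expand Hh.1.1 _ x x_c0 => z.
  exact: (HBset_vanish_on_tails F_c0 small g_norm1 Hh).
rewrite (expand f Hf) (expand a Ha) -sumrB.
by apply: eq_bigr => i _; rewrite mulrBl.
Qed.
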